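(* Let $k$ be a field of characteristic $p\ne2$ and $G=\mathrm{SL}_n(k)=\mathrm{SL}(V)$. Assume that $x\in G$ is an involution, $y\in G$ is a unipotent element with quadratic minimal polynomial (i.e. minimal polynomial $(T-1)^2$), and $z\in G$ is a regular unipotent element (a unipotent element with a single Jordan block of size $n$ on $V$). Then $xyz\ne1$. *)

From mathcomp Require Import all_boot all_order all_algebra.
Set Implicit Arguments. Unset Strict Implicit. Unset Printing Implicit Defensive.
Import GRing.Theory.
Local Open Scope ring_scope.

Definition unip_jordan_block (k : fieldType) (m : nat) : 'M[k]_m :=
  \matrix_(i < m, j < m) ((i == j :> nat)%:R + (j == i.+1 :> nat)%:R).

Definition regular_unipotent (k : fieldType) (m : nat) (z : 'M[k]_m) : Prop :=
  exists2 P : 'M[k]_m, P \in unitmx & z = invmx P *m unip_jordan_block k m *m P.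

(* Since x is an involution, xyz = 1 gives yz = x, and (y - 1)^2 = 0 turns
   into (z^-1 - x)(x - z) = 0, i.e. zxz = 2z - x.  The commutator c = xz - zx
   then satisfies zcz = -c, which for unipotent z forces c = 0 once 2 is not a
   zero divisor.  So x and z commute, (z - 1)^2 = 2(x - 1)z, and x - 1 is
   nilpotent; but (x - 1)^2 = -2(x - 1), and a nilpotent element with this
   property vanishes.  Hence x = 1. *)

From mathcomp Require Import all_boot all_order all_algebra.
From mathcomp Require Import zify.
Set Implicit Arguments.
Unset Strict Implicit.
Unset Printing Implicit Defensive.

Import GRing.Theory.
Local Open Scope ring_scope.

Lemma horner_mx_XsubC1_exp (R : comNzRingType) n m (A : 'M[R]_n.+1) :
  horner_mx A (('X - 1) ^+ m) = (A - 1) ^+ m.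
Proof. by rewrite rmorphXn rmorphB /= horner_mx_X rmorph1. Qed.

Lemma trmxX (R : comPzRingType) n m (A : 'M[R]_n.+1) : (A ^+ m)^T = A^T ^+ m.
Proof.
elim: m => [|m IHm]; first by rewrite !expr0 -idmxE trmx1.
by rewrite exprSr -mulmxE trmx_mul IHm mulmxE -exprS.
Qed.

Lemma unip_jordan_block_nilpotent (k : fieldType) n :
  (unip_jordan_block k n.+1 - 1) ^+ n.+1 = 0.
Proof.
set J := unip_jordan_block k n.+1.
(* char_poly_trig wants a lower triangular matrix, hence J^T. *)
have JT_trig : is_trig_mx J^T.
  apply/is_trig_mxP => i j lt_ij; rewrite !mxE.
  by rewrite gtn_eqF // ltn_eqF ?addr0 // ltnW.
have charJT : char_poly J^T = ('X - 1) ^+ n.+1.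
  rewrite char_poly_trig // (eq_bigr (fun _ => 'X - 1)) ?prodr_const ?card_ord //.
  by move=> i _; rewrite !mxE eqxx ltn_eqF // addr0 polyC1.
apply: trmx_inj; rewrite trmxX linearB /= -idmxE trmx1 idmxE linear0.
by rewrite -horner_mx_XsubC1_exp -charJT Cayley_Hamilton.
Qed.

Lemma regular_unipotent_nilpotent (k : fieldType) n (z : 'M[k]_n.+1) :
  regular_unipotent z -> (z - 1) ^+ n.+1 = 0.
Proof.
case=> P P_unit ->.
rewrite -horner_mx_XsubC1_exp horner_mx_uconjC // horner_mx_XsubC1_exp.
by rewrite unip_jordan_block_nilpotent mulmx0 mul0mx.
Qed.

Lemma unipotent_unit (R : unitRingType) m (u : R) :
  (u - 1) ^+ m = 0 -> u \is a GRing.unit.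
Proof.
move=> nil_u; set s := \sum_(i < m) (1 - u) ^+ i.
(* the geometric series of 1 - u is an inverse of u *)
have us : u * s = 1.
  have := subrX1 (1 - u) m.
  rewrite -[1 - u]opprB exprNn nil_u mulr0 sub0r.
  have -> : - (u - 1) - 1 = - u by rewrite opprB addrAC subrr add0r.
  by rewrite opprB mulNr => /oppr_inj/esym.
apply/unitrP; exists s; split=> //.
have cus : GRing.comm u s.
  apply: commr_sum => i _; apply: commrX.
  by rewrite /GRing.comm mulrBr mulrBl mulr1 mul1r.
by rewrite -cus.
Qed.

Section TwoTorsionFree.

Variable R : pzRingType.
Hypothesis two_reg : forall a : R, a *+ 2 = 0 -> a = 0.

Lemma mulrn_exp2_eq0 m (a : R) : a *+ (2 ^ m) = 0 -> a = 0.
Proof.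
elim: m => [|m IHm]; first by rewrite expn0.
by rewrite expnSr mulrnA => /two_reg.
Qed.

(* Expanding N^a ((1 + N) c (1 + N) + c) N^b shows that 2 N^a c N^b is a sum
   of terms N^a' c N^b' with a' + b' > a + b; induct downwards from 2m. *)
Lemma unipotent_anticonj_eq0 m (u c : R) :
  (u - 1) ^+ m = 0 -> u * c * u = - c -> c = 0.
Proof.
move=> u_unip ucu.
have : (u - 1 + 1) * c * (u - 1 + 1) + c = 0 by rewrite subrK ucu addNr.
move: (u - 1) u_unip => N nilN ucu0.
have Nx_eq0 j : (m <= j)%N -> N ^+ j = 0.
  by move=> le_mj; rewrite -(subnK le_mj) exprD nilN mulr0.
have expand a b : N ^+ a.+1 * c * N ^+ b.+1 + N ^+ a * c * N ^+ b.+1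
    + (N ^+ a.+1 * c * N ^+ b + N ^+ a * c * N ^+ b) + N ^+ a * c * N ^+ b = 0.
  have := congr1 (fun d => N ^+ a * d * N ^+ b) ucu0.
  rewrite /= mulr0 mul0r !mulrDr !mulrDl !mulr1 !mul1r !mulrDr !mulrDl.
  by rewrite !mulrA -!exprSr -!(mulrA _ N (N ^+ b)) -!exprS.
suff N_c_N t a b : (2 * m <= a + b + t)%N -> N ^+ a * c * N ^+ b = 0.
  by have := N_c_N (2 * m)%N 0%N 0%N (leqnn _); rewrite expr0 mulr1 mul1r.
elim: t a b => [|t IHt] a b le_2m.
  case: (leqP m a) => [le_ma|lt_am]; first by rewrite Nx_eq0 // !mul0r.
  by rewrite (Nx_eq0 b) ?mulr0 //; lia.
apply: two_reg; have := expand a b.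
by rewrite (IHt a.+1 b) ?(IHt a b.+1) ?(IHt a.+1 b.+1) ?add0r ?mulr2n //; lia.
Qed.

Lemma nilpotent_quasi_idempotent_eq0 m (d : R) :
  d ^+ m = 0 -> d * d = - (d *+ 2) -> d = 0.
Proof.
move=> nil_d dd.
suff dX j : d ^+ j.+2 = 0 -> d ^+ j.+1 = 0.
  elim: m nil_d => [|m IHm]; first by rewrite expr0 => d0; rewrite -[d]mul1r d0 mul0r.
  case: m IHm => [|m IHm]; first by rewrite expr1.
  by move/dX/IHm.
rewrite exprSr exprSr -mulrA dd mulrN mulrnAr -exprSr => /eqP.
by rewrite oppr_eq0 => /eqP/two_reg.
Qed.

End TwoTorsionFree.

Section InvolutionUnipotentProduct.

Variable R : unitRingType.
Hypothesis two_reg : forall a : R, a *+ 2 = 0 -> a = 0.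
Variables (m : nat) (x y z : R).
Hypotheses (xx : x * x = 1) (y_unip : (y - 1) ^+ 2 = 0).
Hypotheses (z_unip : (z - 1) ^+ m = 0) (xyz : x * y * z = 1).

Let z_unit : z \is a GRing.unit := unipotent_unit z_unip.

Lemma involution_sandwich : z * x * z = z *+ 2 - x.
Proof.
have yz : y * z = x.
  by rewrite -[y * z]mul1r -xx -mulrA [x * (y * z)]mulrA xyz mulr1.
have xy : x * (y - 1) = z^-1 - x.
  by rewrite -[y](mulrK z_unit) yz mulrBr mulr1 mulrA xx mul1r.
have yz1 : (y - 1) * z = x - z by rewrite mulrBl mul1r yz.
have : (z^-1 - x) * (x - z) = 0.
  by rewrite -xy -yz1 mulrA -(mulrA x) -expr2 y_unip mulr0 mul0r.
rewrite mulrBl !mulrBr mulVr // xx => /(congr1 (fun d => z * d)).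
rewrite mulr0 !mulrBr mulr1 mulrA mulrV // mul1r mulrA.
move/eqP; rewrite subr_eq0 => /eqP e.
by rewrite -[z * x * z](subKr z) -e opprB addrA mulr2n.
Qed.

Lemma involution_commute : x * z = z * x.
Proof.
apply/eqP; rewrite -subr_eq0; apply/eqP.
apply: (unipotent_anticonj_eq0 two_reg z_unip).
rewrite mulrBr mulrBl !mulrA involution_sandwich -!(mulrA z z) -mulrA involution_sandwich.
rewrite mulrBl mulrBr mulrnAl mulrnAr [_ *+ 2 - x * z]addrC -addrA subKr.
by rewrite addrC opprB.
Qed.

Lemma involution_unipotent_sqr : (z - 1) ^+ 2 = (x - 1) * z *+ 2.
Proof.
have zz : z ^+ 2 = x * z *+ 2 - 1.
  have := congr1 (fun d => x * d) involution_sandwich.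
  rewrite /= mulrBr mulrnAr xx !mulrA {1}involution_commute -(mulrA z) xx mulr1.
  by rewrite -expr2.
by rewrite sqrrB1 zz mulrBl mul1r mulrnBl addrAC subrK.
Qed.

Lemma involution_sub1_nilpotent : (x - 1) ^+ m = 0.
Proof.
have comm_xz : GRing.comm (x - 1) z.
  by rewrite /GRing.comm mulrBl mulrBr mul1r mulr1 involution_commute.
have : ((x - 1) * z *+ 2) ^+ m = 0.
  by rewrite -involution_unipotent_sqr -exprM mulnC exprM z_unip expr0n.
rewrite exprMn_n => /(mulrn_exp2_eq0 two_reg).
rewrite exprMn_comm // => /(congr1 (fun d => d / z ^+ m)).
by rewrite mulrK ?unitrX // mul0r.
Qed.

Lemma involution_unipotent_product_eq1 : x = 1.
Proof.
apply/eqP; rewrite -subr_eq0; apply/eqP.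
apply: (nilpotent_quasi_idempotent_eq0 two_reg involution_sub1_nilpotent).
by rewrite -expr2 sqrrB1 expr2 xx mulrnBl opprB addrAC -mulr2n.
Qed.

End InvolutionUnipotentProduct.

Theorem lemma4p1 (k : fieldType) (n : nat) (x y z : 'M[k]_n.+1) :
  ~~ (2 \in [pchar k]) ->
  \det x = 1 -> \det y = 1 -> \det z = 1 ->
  x *m x = 1%:M -> x != 1%:M ->
  mxminpoly y = ('X - 1) ^+ 2 ->
  regular_unipotent z ->
  x *m y *m z != 1%:M.
Proof.
move=> char2 _ _ _ xx x_neq1 minpoly_y z_reg.
rewrite !mulmxE idmxE in xx x_neq1 *.
have two_neq0 : (2%:R : k) != 0 by move: char2; rewrite inE.
have two_reg (a : 'M[k]_n.+1) : a *+ 2 = 0 -> a = 0.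
  by move/eqP; rewrite -scaler_nat scalemx_eq0 (negbTE two_neq0) => /eqP.
have y_unip : (y - 1) ^+ 2 = 0.
  by rewrite -horner_mx_XsubC1_exp -minpoly_y mx_root_minpoly.
apply: contra x_neq1 => /eqP xyz; apply/eqP.
exact: (involution_unipotent_product_eq1 two_reg xx y_unip
          (regular_unipotent_nilpotent z_reg) xyz).
Qed.
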